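(* Let $b\ge2$ be an integer, let $X\subseteq\mathbf{N}^*$ be nonempty, let $J=\{\lfloor\log_b x\rfloor: x\in X\}$, let $j_0=\min J$, and let $G$ denote the smallest $b$-dc-semigroup containing $X$. \begin{enumerate} \item Suppose $j_0>0$, and let $l_0$ be a positive integer with $\{j_0,j_0+1,\dots,j_0+l_0-1\}\subseteq J$. Put $d=\lceil j_0/l_0\rceil$ and $t=dj_0$. \begin{itemize} \item If $d=1$, then $G=I_b(j_0,+\infty)$. \item If $d>1$, write $J\cap\{0,1,\dots,t-1\}=\bigcup_{k=0}^{n}\{j_k,j_k+1,\dots,j_k+l_k-1\}$ with $n\in\mathbf{N}$, $j_k\in\mathbf{N}$, $l_k\in\mathbf{N}^*$ and $j_{k+1}>j_k+l_k$ for $0\le k<n$. Then $G$ is the union of $I_b(t,+\infty)$ with all the sets $I_b\bigl(\sum_{i=1}^e j_{k_i},\ \sum_{i=1}^e l_{k_i}\bigr)$, where $1\le e<d$ and $k_1,\dots,k_e\in\{0,\dots,n\}$ with $j_{k_1}\le\dots\le j_{k_e}$. \end{itemize} \item Suppose $j_0=0$ and $b=2$. If $X=\{1\}$ then $G=\{1\}$. Otherwise, $G=\{1\}\cup G'$, where $G'$ is the smallest $2$-dc-semigroup containing $X\setminus\{1\}$ (described by part (1), applied with $J$ replaced by $J\setminus\{0\}$). \item Suppose $j_0=0$ and $b>2$. Then $G=\mathbf{N}^*$. \end{enumerate}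
   Context: $\mathbf{N}=\{0,1,2,\dots\}$ and $\mathbf{N}^*=\mathbf{N}\setminus\{0\}$. For an integer $b\ge2$, a $b$-dc-semigroup is a subsemigroup $G$ of the multiplicative semigroup $(\mathbf{N}^*,\cdot)$ which is closed with respect to the number of base-$b$ digits: if $x\in G$ and $b^{n-1}\le x<b^n$ then $\{y\in\mathbf{N}: b^{n-1}\le y<b^n\}\subseteq G$. For $i\in\mathbf{N}$ and $j\in\mathbf{N}^*$, $I_b(i,j)=\{x\in\mathbf{N}: b^i\le x<b^{i+j}\}$ and $I_b(i,+\infty)=\{x\in\mathbf{N}: x\ge b^i\}$. Note $\lfloor\log_b x\rfloor$ is one less than the number of base-$b$ digits of $x$. *)

From mathcomp Require Import all_boot.
Set Implicit Arguments. Unset Strict Implicit. Unset Printing Implicit Defensive.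

Definition dc_semigroup (b : nat) (G : nat -> Prop) : Prop :=
  [/\ (forall x, G x -> 0 < x),
      (forall x y, G x -> G y -> G (x * y)) &
      (forall n x y, G x -> b ^ n <= x < b ^ n.+1 -> b ^ n <= y < b ^ n.+1 -> G y)].

Definition gen_dc (b : nat) (X : nat -> Prop) (x : nat) : Prop :=
  forall G, dc_semigroup b G -> (forall y, X y -> G y) -> G x.

Definition Ib (b i j x : nat) : Prop := b ^ i <= x < b ^ (i + j).
Definition Ib_inf (b i x : nat) : Prop := b ^ i <= x.

(* J = { floor(log_b x) : x in X }; trunc_log b x = floor(log_b x) for x >= 1 *)
Definition logset (b : nat) (X : nat -> Prop) (j : nat) : Prop :=
  exists x, X x /\ trunc_log b x = j.

Definition cdiv (m n : nat) : nat := (m + n.-1) %/ n.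

From mathcomp Require Import all_boot zify.

Set Implicit Arguments.
Unset Strict Implicit.
Unset Printing Implicit Defensive.

(** Call [n] a full level of [G] when [G] contains all numbers with [n + 1]
   base-[b] digits.  A [b]-dc-semigroup is the set of positive numbers lying on
   its full levels, and since [b^a * b^c = b^(a+c)] and
   [(b^(a+1) - 1) * (b^(c+1) - 1) >= b^(a+c+1)] (for [b > 2], or for [a, c > 0]),
   the full levels of the generated semigroup are closed under [a + c] and,
   under that proviso, [a + c + 1].  Conversely any set of levels containing
   [J] and closed under [a + c] and [a + c + 1] carves out a dc-semigroup,
   because [log (x y)] is [log x + log y] or one more.  So [G] is described by
   the least such set of levels, which is computed part by part: from [b > 2]
   and [0 \in J] all levels follow; for [b = 2] the number [1] splits off; and
   for [j0 > 0] sums of intervals of [J] fill everything from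
   [ceil(j0/l0) * j0] on, below which only sums of fewer than [ceil(j0/l0)]
   blocks of [J] are reachable. *)

Definition level_closed (E : nat -> Prop) : Prop :=
  forall i c, E i -> E c -> E (i + c) /\ E (i + c).+1.

Section TruncLog.
Variable b : nat.
Hypothesis hb : 2 <= b.

Lemma expb_gt0 k : 0 < b ^ k.
Proof. by rewrite expn_gt0; lia. Qed.

Lemma leq_exp_trunc_log k x : 0 < x -> (b ^ k <= x) = (k <= trunc_log b x).
Proof.
move=> x0; apply/idP/idP => h; first exact: trunc_log_max.
by apply: leq_trans (trunc_logP hb x0); rewrite leq_exp2l.
Qed.

Lemma ltn_exp_trunc_log k x : 0 < x -> (x < b ^ k) = (trunc_log b x < k).
Proof. by move=> x0; rewrite ltnNge leq_exp_trunc_log // -ltnNge. Qed.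

Lemma trunc_logM x y : 0 < x -> 0 < y ->
  trunc_log b x + trunc_log b y <= trunc_log b (x * y)
    <= (trunc_log b x + trunc_log b y).+1.
Proof.
move=> x0 y0; have xy0 : 0 < x * y by rewrite muln_gt0 x0.
rewrite -leq_exp_trunc_log // expnD leq_mul ?trunc_logP //=.
rewrite -ltnS -ltn_exp_trunc_log //.
have := trunc_log_ltn x hb; have := trunc_log_ltn y hb.
rewrite !expnS expnD; nia.
Qed.

Lemma dc_semigroup_levels (E : nat -> Prop) : level_closed E ->
  dc_semigroup b (fun x => 0 < x /\ E (trunc_log b x)).
Proof.
move=> hE; split.
- by move=> x [].
- move=> x y [x0 hx] [y0 hy]; split; first by rewrite muln_gt0 x0.
  have /andP[lo hi] := trunc_logM x0 y0; have [e1 e2] := hE _ _ hx hy.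
  have [->|->] : trunc_log b (x * y) = trunc_log b x + trunc_log b y \/
    trunc_log b (x * y) = (trunc_log b x + trunc_log b y).+1 by lia.
  + exact: e1.
  + exact: e2.
- move=> n x y [x0 hx] hxn hyn.
  have y0 : 0 < y by case/andP: hyn => h _; exact: leq_trans (expb_gt0 n) h.
  by split => //; rewrite (trunc_log_eq hb hyn) -(trunc_log_eq hb hxn).
Qed.

End TruncLog.

Lemma size_mul_leq_sum (j0 : nat) (f : nat -> nat) (ks : seq nat) :
  {in ks, forall k, j0 <= f k} -> size ks * j0 <= \sum_(k <- ks) f k.
Proof.
elim: ks => [|k ks IH] hf; first by rewrite big_nil.
rewrite big_cons mulSn leq_add ?hf ?mem_head // IH // => k' hk'.
by rewrite hf // mem_behead.
Qed.

Definition sum_levels (d j0 n : nat) (j l : nat -> nat) (m : nat) : Prop :=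
  d * j0 <= m \/ exists ks : seq nat,
    [/\ 1 <= size ks < d, all (fun k => k <= n) ks, sorted (fun a c => j a <= j c) ks &
        \sum_(k <- ks) j k <= m < \sum_(k <- ks) j k + \sum_(k <- ks) l k].

Lemma level_closed_sum_levels d j0 n (j l : nat -> nat) :
  (forall k, k <= n -> j0 <= j k) -> level_closed (sum_levels d j0 n j l).
Proof.
move=> hj i c [hi | [ks1 [s1 a1 _ h1]]]; first by move=> _; split; left; lia.
case=> [hc | [ks2 [s2 a2 _ h2]]]; first by split; left; lia.
set ks := sort (fun a c => j a <= j c) (ks1 ++ ks2).
have sum_ks (f : nat -> nat) :
    \sum_(k <- ks) f k = \sum_(k <- ks1) f k + \sum_(k <- ks2) f k.
  by rewrite (perm_big _ (permEl (perm_sort _ _))) big_cat.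
have size_ks : size ks = size ks1 + size ks2 by rewrite size_sort size_cat.
case: (ltnP (size ks) d) => hd.
  split; right; exists ks; rewrite ?sum_ks; split => //; try lia;
    by [rewrite all_sort all_cat a1 a2 | apply: sort_sorted => a a'; apply: leq_total].
have g1 := size_mul_leq_sum (fun k hk => hj k (allP a1 k hk)).
have g2 := size_mul_leq_sum (fun k hk => hj k (allP a2 k hk)).
have : d * j0 <= size ks * j0 by rewrite leq_mul2r hd orbT.
by rewrite size_ks => g3; split; left; nia.
Qed.

Lemma Ib_infE b i x : 2 <= b -> Ib_inf b i x <-> 0 < x /\ i <= trunc_log b x.
Proof.
move=> hb; split => [h | [x0]]; last by rewrite /Ib_inf leq_exp_trunc_log.
have x0 : 0 < x := leq_trans (expb_gt0 hb i) h.
by rewrite -leq_exp_trunc_log.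
Qed.

Lemma IbE b i j x : 2 <= b -> Ib b i j x <-> 0 < x /\ i <= trunc_log b x < i + j.
Proof.
move=> hb; split => [/andP[h1 h2] | [x0]].
  have x0 : 0 < x := leq_trans (expb_gt0 hb i) h1.
  by rewrite -leq_exp_trunc_log // h1 -ltn_exp_trunc_log.
by rewrite /Ib leq_exp_trunc_log // ltn_exp_trunc_log.
Qed.

Lemma sum_levelsE b d j0 n (j l : nat -> nat) x : 2 <= b ->
  0 < x /\ sum_levels d j0 n j l (trunc_log b x) <->
  Ib_inf b (d * j0) x \/ exists ks : seq nat,
    [/\ 1 <= size ks < d, all (fun k => k <= n) ks, sorted (fun a c => j a <= j c) ks &
        Ib b (\sum_(k <- ks) j k) (\sum_(k <- ks) l k) x].
Proof.
move=> hb; split.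
  case=> x0 [h | [ks [h1 h2 h3 h4]]]; first by left; apply/Ib_infE.
  by right; exists ks; split => //; apply/IbE.
case=> [/(Ib_infE _ _ hb) [x0 h] | [ks [h1 h2 h3 /(IbE _ _ _ hb) [x0 h4]]]].
  by split; [|left].
by split; [|right; exists ks].
Qed.

Section Generated.
Variables (b : nat) (X : nat -> Prop).
Hypothesis hb : 2 <= b.
Hypothesis hX : forall x, X x -> 0 < x.

Lemma gen_dc_pos x : gen_dc b X x -> 0 < x.
Proof.
move=> hx; apply: (hx (fun z => 0 < z)); last exact: hX.
split => //; first by move=> ? ? ? ?; rewrite muln_gt0; apply/andP.
by move=> n x0 y _ _ /andP[h _]; exact: leq_trans (expb_gt0 hb n) h.
Qed.

Lemma dc_semigroup_gen_dc : dc_semigroup b (gen_dc b X).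
Proof.
split; first exact: gen_dc_pos.
- by move=> x y hx hy G hG hXG; case: (hG) => _ hm _; apply: hm; [exact: hx | exact: hy].
- by move=> n x y hx h1 h2 G hG hXG; case: (hG) => _ _ hd; apply: hd h1 h2; exact: hx.
Qed.

Lemma gen_dc_sub x : X x -> gen_dc b X x.
Proof. by move=> hx G _ h; apply: h. Qed.

Definition full_level (n : nat) : Prop :=
  forall y, b ^ n <= y < b ^ n.+1 -> gen_dc b X y.

Lemma full_level_of x n : gen_dc b X x -> b ^ n <= x < b ^ n.+1 -> full_level n.
Proof. by move=> hx h y hy; case: dc_semigroup_gen_dc => _ _ hd; exact: hd hx h hy. Qed.

Lemma gen_dc_full_level x : 0 < x -> gen_dc b X x <-> full_level (trunc_log b x).
Proof.
move=> x0; have hx : b ^ trunc_log b x <= x < b ^ (trunc_log b x).+1.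
  by rewrite trunc_logP ?trunc_log_ltn.
by split => [h | h]; [exact: full_level_of h hx | exact: h].
Qed.

Lemma full_level_logset m : logset b X m -> full_level m.
Proof.
case=> x [hx <-]; apply/gen_dc_full_level; [exact: hX | exact: gen_dc_sub].
Qed.

Lemma full_levelD a c : full_level a -> full_level c -> full_level (a + c).
Proof.
move=> ha hc; have hm : gen_dc b X (b ^ a * b ^ c).
  case: dc_semigroup_gen_dc => _ hm _; apply: hm; [apply: ha | apply: hc];
  by rewrite leqnn /= ltn_exp2l.
by apply: (full_level_of hm); rewrite -expnD leqnn /= ltn_exp2l.
Qed.

Lemma full_levelDS a c : full_level a -> full_level c ->
  (2 < b) || (0 < a) && (0 < c) -> full_level (a + c).+1.
Proof.
move=> ha hc hbc; set P := b ^ a; set Q := b ^ c.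
have P0 : 0 < P by exact: expb_gt0.
have Q0 : 0 < Q by exact: expb_gt0.
have hu : gen_dc b X (b * P - 1) by apply: ha; rewrite -/P expnS -/P; nia.
have hv : gen_dc b X (b * Q - 1) by apply: hc; rewrite -/Q expnS -/Q; nia.
have hm : gen_dc b X ((b * P - 1) * (b * Q - 1)).
  by case: dc_semigroup_gen_dc => _ hm _; apply: hm.
apply: (full_level_of hm); rewrite !expnS expnD -/P -/Q.
case/orP: hbc => [hb3 | /andP[a0 c0]]; first nia.
have Pb : b <= P by rewrite /P -{1}(expn1 b) leq_exp2l.
have Qb : b <= Q by rewrite /Q -{1}(expn1 b) leq_exp2l.
nia.
Qed.

Lemma full_level_interval_add p q r s : 0 < p -> 0 < q -> 0 < r -> 0 < s ->
  (forall m, p <= m < p + q -> full_level m) ->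
  (forall m, r <= m < r + s -> full_level m) ->
  forall m, p + r <= m < p + r + (q + s) -> full_level m.
Proof.
move=> p0 q0 r0 s0 hA hB m hm.
(* Only the top level [p + q + r + s - 1] needs the carry of [full_levelDS]. *)
case: (leqP m (p + q + r + s - 2)) => hm2.
  have -> : m = minn (m - r) (p + q - 1) + (m - minn (m - r) (p + q - 1)) by lia.
  by apply: full_levelD; [apply: hA | apply: hB]; lia.
have -> : m = ((p + q - 1) + (r + s - 1)).+1 by lia.
by apply: full_levelDS; [apply: hA | apply: hB | apply/orP; right]; lia.
Qed.

Lemma full_level_sum (j l : nat -> nat) (ks : seq nat) : ks != [::] ->
  {in ks, forall k, 0 < j k} -> {in ks, forall k, 0 < l k} ->
  {in ks, forall k m, j k <= m < j k + l k -> full_level m} ->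
  forall m, \sum_(k <- ks) j k <= m < \sum_(k <- ks) j k + \sum_(k <- ks) l k ->
    full_level m.
Proof.
elim: ks => // k ks IH _ hj hl hD; rewrite !big_cons.
have tail (P : nat -> Prop) : {in k :: ks, forall k, P k} -> {in ks, forall k, P k}.
  by move=> hP k' hk'; apply: hP; rewrite mem_behead.
case: (eqVneq ks [::]) => [-> | ne].
  by rewrite !big_nil !addn0; apply: hD; rewrite mem_head.
have size0 : 0 < size ks by case: (ks) ne.
have sj := size_mul_leq_sum (tail _ hj); have sl := size_mul_leq_sum (tail _ hl).
apply: full_level_interval_add; rewrite ?hj ?hl ?mem_head //; try lia.
- by apply: hD; rewrite mem_head.
- exact: IH (tail _ hj) (tail _ hl) (tail _ hD).
Qed.

Lemma gen_dc_levelsE (E : nat -> Prop) : level_closed E ->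
  (forall m, logset b X m -> E m) -> (forall m, E m -> full_level m) ->
  forall x, gen_dc b X x <-> 0 < x /\ E (trunc_log b x).
Proof.
move=> hE hJ hfull x; split => [hx | [x0 hEx]].
  apply: (hx (fun z => 0 < z /\ E (trunc_log b z))); first exact: dc_semigroup_levels.
  by move=> y hy; split; [exact: hX | apply: hJ; exists y].
by apply/gen_dc_full_level => //; apply: hfull.
Qed.

Lemma full_level_all : 2 < b -> logset b X 0 -> forall n, full_level n.
Proof.
move=> hb3 /full_level_logset full0; elim=> // n IH.
by rewrite -[n]addn0; apply: full_levelDS; rewrite ?hb3.
Qed.

Lemma gen_dc_all : 2 < b -> logset b X 0 -> forall x, gen_dc b X x <-> 0 < x.
Proof.
move=> hb3 h0 x; split => [/gen_dc_pos // | x0].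
by apply/gen_dc_full_level => //; apply: full_level_all.
Qed.

Section PositiveMinimum.
Variables (j0 l0 : nat).
Hypotheses (j0_gt0 : 0 < j0) (l0_gt0 : 0 < l0).
Hypothesis hJl : forall j, j0 <= j < j0 + l0 -> logset b X j.

Lemma full_level_mul e : 0 < e ->
  forall m, e * j0 <= m < e * j0 + e * l0 -> full_level m.
Proof.
elim: e => // e IH _; case: (posnP e) => [-> | e0].
  by move=> m hm; apply: full_level_logset; apply: hJl; lia.
move=> m hm.
apply: (full_level_interval_add (p := e * j0) (q := e * l0) (r := j0) (s := l0));
  try lia.
- exact: IH.
- by move=> m' hm'; apply: full_level_logset; apply: hJl.
Qed.

Lemma full_level_ge m : cdiv j0 l0 * j0 <= m -> full_level m.
Proof.
rewrite /cdiv => hm; set d := (j0 + l0.-1) %/ l0.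
have d_le : d <= m %/ j0 by have := leq_div2r j0 hm; rewrite mulnK.
have d_gt0 : 0 < d by rewrite divn_gt0 //; lia.
apply: (full_level_mul (e := m %/ j0)); first lia.
(* [m - (m %/ j0) * j0 < j0 <= d * l0 <= (m %/ j0) * l0] *)
have m_eq := divn_eq m j0; have m_mod := ltn_pmod m j0_gt0.
have d_eq := divn_eq (j0 + l0.-1) l0; have d_mod := ltn_pmod (j0 + l0.-1) l0_gt0.
rewrite -/d in d_eq; nia.
Qed.

Hypothesis hmin : forall j, logset b X j -> j0 <= j.

Lemma gen_dc_cdiv1 : cdiv j0 l0 = 1 -> forall x, gen_dc b X x <-> Ib_inf b j0 x.
Proof.
move=> d1 x; apply: iff_trans (iff_sym (Ib_infE _ _ hb)).
apply: (gen_dc_levelsE (E := fun m => j0 <= m)) => [i c hi hc | // | m hm].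
  by split; lia.
by apply: full_level_ge; rewrite d1 mul1n.
Qed.

Lemma gen_dc_sum_levels n (j l : nat -> nat) : 1 < cdiv j0 l0 ->
  (forall k, k <= n -> 0 < l k) ->
  (forall m, (logset b X m /\ m < cdiv j0 l0 * j0) <->
             exists k, k <= n /\ j k <= m < j k + l k) ->
  forall x, gen_dc b X x <-> 0 < x /\ sum_levels (cdiv j0 l0) j0 n j l (trunc_log b x).
Proof.
move=> hd hl hiff.
have block_log k m : k <= n -> j k <= m < j k + l k -> logset b X m.
  by move=> hk hm; have [] := proj2 (hiff m) (ex_intro _ k (conj hk hm)).
have hjn k : k <= n -> j0 <= j k.
  by move=> hk; apply/hmin/(block_log k) => //; have := hl k hk; lia.
apply: (gen_dc_levelsE (E := sum_levels _ j0 n j l)).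
- exact: level_closed_sum_levels.
- move=> m hm; case: (leqP (cdiv j0 l0 * j0) m) => hmt; first by left.
  have [k [hk hkm]] := proj1 (hiff m) (conj hm hmt).
  by right; exists [:: k]; rewrite !big_seq1 /= hk.
- move=> m [hm | [ks [hsz /allP hall _ hm]]]; first exact: full_level_ge.
  apply: (full_level_sum (ks := ks)) hm => [|k hk|k hk|k hk m' hm'].
  + by case: (ks) hsz.
  + exact: leq_trans j0_gt0 (hjn k (hall k hk)).
  + exact: hl _ (hall k hk).
  + exact: full_level_logset (block_log _ _ (hall k hk) hm').
Qed.

End PositiveMinimum.
End Generated.

Lemma logset2_0 (X : nat -> Prop) : (forall x, X x -> 0 < x) -> logset 2 X 0 -> X 1.
Proof.
move=> hX [x [hx hx0]]; have x0 := hX x hx.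
have : x < 2 ^ 1 by rewrite ltn_exp_trunc_log // hx0.
by rewrite expn1 => x2; have <- : x = 1 by lia.
Qed.

Lemma dc_semigroup2_add1 (G : nat -> Prop) :
  dc_semigroup 2 G -> dc_semigroup 2 (fun z => z = 1 \/ G z).
Proof.
case=> hpos hmul hlev.
have lev0 n : 2 ^ n <= 1 -> n = 0.
  by rewrite -[1](expn0 2) leq_exp2l // leqn0 => /eqP.
split.
- by move=> z [-> | /hpos].
- move=> u v [-> | hu] [-> | hv]; rewrite ?mul1n ?muln1; [by left | by right | by right |].
  by right; apply: hmul.
- move=> n u v [-> | hu] hun hvn; last by right; apply: hlev hu hun hvn.
  by move: hun hvn => /andP[/lev0 -> _] /andP[h1 h2]; left; lia.
Qed.

Lemma gen_dc_empty b (X : nat -> Prop) x : (forall y, ~ X y) -> ~ gen_dc b X x.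
Proof.
by move=> hX hx; apply: (hx (fun _ => False)) => //; split.
Qed.

Lemma gen_dc2_split (X : nat -> Prop) : (forall x, X x -> 0 < x) -> X 1 ->
  forall x, gen_dc 2 X x <-> x = 1 \/ gen_dc 2 (fun y => X y /\ y <> 1) x.
Proof.
move=> hX X1 x; set X' := fun y => X y /\ y <> 1.
have hX' y : X' y -> 0 < y by case=> /hX.
split => [hx | [-> | hx]]; last 2 first.
- exact: gen_dc_sub.
- by apply: hx; [exact: dc_semigroup_gen_dc | move=> y [/gen_dc_sub]].
apply: (hx (fun z => z = 1 \/ gen_dc 2 X' z)).
  exact/dc_semigroup2_add1/dc_semigroup_gen_dc.
move=> y hy; case: (eqVneq y 1) => [-> | /eqP y1]; first by left.
by right; apply: gen_dc_sub.
Qed.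

Theorem mainTheorem4 (b : nat) (X : nat -> Prop) (j0 : nat) :
  2 <= b ->
  (forall x, X x -> 0 < x) ->
  (exists x, X x) ->
  logset b X j0 -> (forall j, logset b X j -> j0 <= j) ->
  (* part (1) *)
  (0 < j0 -> forall l0 : nat, 0 < l0 ->
     (forall j, j0 <= j < j0 + l0 -> logset b X j) ->
     (cdiv j0 l0 = 1 -> forall x, gen_dc b X x <-> Ib_inf b j0 x) /\
     (1 < cdiv j0 l0 ->
       forall (n : nat) (j l : nat -> nat),
         (forall k, k <= n -> 0 < l k) ->
         (forall k, k < n -> j k + l k < j k.+1) ->
         (forall m, (logset b X m /\ m < cdiv j0 l0 * j0) <->
                    exists k, k <= n /\ j k <= m < j k + l k) ->
         forall x, gen_dc b X x <->
           (Ib_inf b (cdiv j0 l0 * j0) x \/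
            exists ks : seq nat,
              [/\ 1 <= size ks < cdiv j0 l0,
                  all (fun k => k <= n) ks,
                  sorted (fun a c => j a <= j c) ks &
                  Ib b (\sum_(k <- ks) j k) (\sum_(k <- ks) l k) x]))) /\
  (* part (2) *)
  (j0 = 0 -> b = 2 ->
     ((forall x, X x <-> x = 1) -> forall x, gen_dc b X x <-> x = 1) /\
     (~ (forall x, X x <-> x = 1) ->
        forall x, gen_dc b X x <-> (x = 1 \/ gen_dc 2 (fun y => X y /\ y <> 1) x))) /\
  (* part (3) *)
  (j0 = 0 -> 2 < b -> forall x, gen_dc b X x <-> 0 < x).
Proof.
move=> hb hX _ hj0 hmin; split; [|split].
- move=> j0_gt0 l0 l0_gt0 hJl; split; first exact: gen_dc_cdiv1.
  move=> hd n j l hl _ hiff x.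
  exact: iff_trans (gen_dc_sum_levels hb hX j0_gt0 l0_gt0 hJl hmin hd hl hiff x)
                   (sum_levelsE _ _ _ _ _ _ hb).
- move=> j00 b2; subst j0 b; have X1 := logset2_0 hX hj0; split; last first.
    by move=> _; exact: gen_dc2_split.
  move=> hX1 x; apply: iff_trans (gen_dc2_split hX X1 x) _.
  split=> [[// | /gen_dc_empty hx] | ->]; last by left.
  by exfalso; apply: hx => y [/hX1].
- by move=> j00 hb3; subst j0; exact: gen_dc_all hb hX hb3 hj0.
Qed.
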